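(* Let $u,v$ be positive integers with $uv\equiv 4,8\pmod{12}$ and $v$ even. Then $\Phi(u\times v,4,2)\le\left\lfloor\frac{u}{4}\left(\left\lfloor\frac{uv-1}{3}\left\lfloor\frac{uv-2}{2}\right\rfloor\right\rfloor-1\right)\right\rfloor$.
   Context: A 2-D $(u\times v,4,2)$-OOC is a family $\mathcal C$ of $u\times v$ $(0,1)$-matrices of Hamming weight $4$ such that for all $A=(a_{ij}),B=(b_{ij})\in\mathcal C$ and integers $r$ with $A\ne B$ or $r\not\equiv0\pmod v$, $\sum_{i,j}a_{ij}b_{i,j+r}\le 2$ (column indices mod $v$). $\Phi(u\times v,4,2)$ is the largest size of such a code. *)

From mathcomp Require Import all_boot all_algebra.
Set Implicit Arguments. Unset Strict Implicit. Unset Printing Implicit Defensive.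

Definition hweight (u v : nat) (A : 'M[bool]_(u, v)) : nat :=
  #|[set ij : 'I_u * 'I_v | A ij.1 ij.2]|.

(* column index j + r taken modulo v (v > 0 assumed when used) *)
Definition shift_col (v : nat) (j : 'I_v) (r : nat) : nat := (j + r) %% v.

Definition corr (u v : nat) (A B : 'M[bool]_(u, v)) (r : nat) : nat :=
  \sum_(i < u) \sum_(j < v)
    (A i j && [exists j' : 'I_v, (val j' == shift_col j r) && B i j'] : nat).

(* Shifts r range over naturals; every integer shift is congruent mod v
   to a natural one. *)
Definition is_OOC (u v w lam : nat) (C : {set 'M[bool]_(u, v)}) : Prop :=
  (forall A, A \in C -> hweight A = w) /\
  (forall A B (r : nat), A \in C -> B \in C ->
     (A != B) || (r %% v != 0) -> corr A B r <= lam).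

Definition lemma5p4_bound (u v : nat) : nat :=
  (u * ((((u * v - 1) * ((u * v - 2) %/ 2)) %/ 3) - 1)) %/ 4.

From mathcomp Require Import all_boot all_algebra zify ring.
Set Implicit Arguments. Unset Strict Implicit. Unset Printing Implicit Defensive.

(* Put N = uv and view a code C as a family
   of 4-subsets ("blocks") of the point set P = 'I_u * 'I_v: the block of a
   codeword A shifted by j is the support of A translated back by j columns.
   Fix a row i and keep the shifted blocks through the point x = (i,0); the
   OOC condition says that two distinct such blocks meet in at most 2 points.
   1. General packing count: if a family of 4-sets through x pairwise meets
      in <= 2 points, then each point z <> x lies on <= (N-2)/2 blocks, since
      the pairs B \ {x,z} are disjoint.  Summing over z (3 points per block),
      and using one point y <> x of even degree when 4 | N, gives
      6 |D| + 2 <= (N-1)(N-2).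
   2. For y = (i, v/2) the shift by v/2 is a fixed-point-free involution on
      the blocks through x and y, so the degree of y is even (v even).
   3. Each codeword has 4 ones, so summing the row counts gives 4 |C|;
      the arithmetic for N = 4, 8 (mod 12) turns step 1 into the floor bound. *)

Lemma card_sum_indicator (T : finType) (A : {pred T}) :
  #|A| = \sum_x (x \in A : nat).
Proof. by rewrite -sum1_card big_mkcond /=; apply: eq_bigr => x _; case: (x \in A). Qed.

Lemma double_count (T1 T2 : finType) (S : {set T1}) (F : T1 -> {set T2}) :
  \sum_(a in S) #|F a| = \sum_b #|[set a in S | b \in F a]|.
Proof.
under eq_bigr do rewrite card_sum_indicator.
rewrite exchange_big /=; apply: eq_bigr => b _.
rewrite card_sum_indicator big_mkcond /=; apply: eq_bigr => a _.
by rewrite !inE; case: (a \in S).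
Qed.

Section Packing.
Variables (T I : finType) (B : I -> {set T}) (D : {set I}) (x : T).
Hypothesis block_card : forall d, d \in D -> #|B d| = 4.
Hypothesis block_meet :
  forall d1 d2, d1 \in D -> d2 \in D -> d1 != d2 -> #|B d1 :&: B d2| <= 2.
Hypothesis block_through : forall d, d \in D -> x \in B d.

Definition degree (z : T) : nat := #|[set d in D | z \in B d]|.

Lemma triple_on_one_block (a b c : T) : a != b -> a != c -> b != c ->
  #|[set d in D | [&& a \in B d, b \in B d & c \in B d]]| <= 1.
Proof.
move=> ab ac bc; apply/card_le1_eqP => d1 d2.
rewrite inE => /andP[D1 /and3P[a1 b1 c1]]; rewrite inE => /andP[D2 /and3P[a2 b2 c2]].
case: (eqVneq d1 d2) => // neq; exfalso.
have sub : a |: (b |: [set c]) \subset B d1 :&: B d2.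
  by apply/subsetP => q; rewrite in_setI !in_setU1 in_set1 => /or3P[] /eqP ->;
     apply/andP; split.
have := leq_trans (subset_leq_card sub) (block_meet D1 D2 neq).
by rewrite !cardsU1 cards1 !inE (negbTE ab) (negbTE ac) (negbTE bc).
Qed.

(* The blocks through x and z contribute disjoint pairs B d \ {x,z}. *)
Lemma degree_bound (z : T) : z != x -> 2 * degree z <= #|T| - 2.
Proof.
move=> zx; set Dz := [set d in D | z \in B d].
have pairs : \sum_(d in Dz) #|B d :\: [set x; z]| = 2 * #|Dz|.
  rewrite mulnC -sum_nat_const; apply: eq_bigr => d; rewrite inE => /andP[dD zd].
  have sub : [set x; z] \subset B d.
    by apply/subsetP => q; rewrite in_set2 => /orP[] /eqP ->; [exact: block_through|].
  by rewrite cardsD (setIidPr sub) block_card // cards2 eq_sym zx.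
rewrite /degree -/Dz -pairs double_count.
have -> : #|T| - 2 = \sum_q (q \notin [set x; z] : nat).
  rewrite -(cardsC [set x; z]) cards2 eq_sym zx addKn card_sum_indicator.
  by apply: eq_bigr => q _; rewrite inE.
apply: leq_sum => q _; case: (boolP (q \in [set x; z])) => hq /=.
  rewrite leqn0 cards_eq0; apply/eqP/setP => d.
  by rewrite inE in_set0 in_setD hq andbF.
have [qx qz] : q != x /\ q != z.
  by split; apply: contra hq => /eqP ->; rewrite !inE eqxx ?orbT.
apply: leq_trans (triple_on_one_block (a := x) (b := z) (c := q) _ _ _);
  rewrite 1?eq_sym //.
apply: subset_leq_card; apply/subsetP => d; rewrite !inE.
by move=> /andP[/andP[dD zd] /andP[_ qd]]; rewrite dD zd qd block_through.
Qed.

(* Counting incidences with the points z <> x: each block has 3 of them. *)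
Lemma degree_sum : 3 * #|D| = \sum_(z | z != x) degree z.
Proof.
have -> : 3 * #|D| = \sum_z #|[set d in D | z \in B d :\ x]|.
  rewrite -double_count mulnC -sum_nat_const; apply: eq_bigr => d dD.
  by apply: succn_inj; rewrite -(block_card dD) (cardsD1 x (B d)) block_through.
rewrite (bigD1 x) //=.
have -> : #|[set d in D | x \in B d :\ x]| = 0.
  by apply/eqP; rewrite cards_eq0; apply/eqP/setP => d; rewrite !inE eqxx andbF.
by rewrite add0n; apply: eq_bigr => z zx; apply: eq_card => d; rewrite !inE zx.
Qed.

Lemma packing_bound (y : T) : y != x -> ~~ odd (degree y) -> #|T| %% 4 = 0 ->
  6 * #|D| + 2 <= (#|T| - 1) * (#|T| - 2).
Proof.
move=> yx ev T_mod4.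
have deg_y : 2 * degree y <= #|T| - 4.
  have := degree_bound yx; have := odd_double_half (degree y).
  rewrite (negbTE ev) add0n -mul2n; lia.
have others : #|[set z | (z != x) && (z != y)]| = #|T| - 2.
  have -> : [set z | (z != x) && (z != y)] = ~: [set x; y].
    by apply/setP => z; rewrite !inE negb_or.
  by have := cardsC [set x; y]; rewrite cards2 eq_sym yx => <-; rewrite addKn.
have N2 : 2 <= #|T| by have := max_card (mem [set x; y]); rewrite cards2 eq_sym yx.
have : 6 * #|D| <= (#|T| - 4) + (#|T| - 2) * (#|T| - 2).
  rewrite -[6]/(2 * 3) -mulnA degree_sum big_distrr /= (bigD1 y) //=; apply: leq_add => //.
  apply: (@leq_trans (\sum_(z | (z != x) && (z != y)) (#|T| - 2))).
    by apply: leq_sum => z /andP[zx _]; apply: degree_bound.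
  by rewrite sum_nat_cond_const others.
by move: N2 T_mod4; nia.
Qed.

End Packing.

Lemma even_card_swap (T : finType) (S : {set T}) (f : T -> T) (P : {pred T}) :
  involutive f -> {in S, forall d, f d \in S} ->
  {in S, forall d, P (f d) = ~~ P d} -> ~~ odd #|S|.
Proof.
move=> fK fS fP; set A := [set d | P d].
have swap : S :\: A = f @: (S :&: A).
  apply/setP => d; apply/idP/imsetP.
    rewrite !inE => /andP[nPd dS]; exists (f d); last by rewrite fK.
    by rewrite !inE fS // fP // nPd.
  by move=> [e]; rewrite !inE => /andP[eS Pe] ->; rewrite fS // fP // Pe.
have := cardsID A S; rewrite swap card_imset; last exact: inv_inj.
by move=> <-; rewrite addnn odd_double.
Qed.

Section Translates.
Variables (u n : nat).
Local Notation w := n.+1.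
Local Notation point := ('I_u * 'I_w)%type.
Local Notation matrix := 'M[bool]_(u, w).

Definition shift_ord (j : 'I_w) (s : nat) : 'I_w :=
  Ordinal (ltn_pmod (j + s) (ltn0Sn n)).

Lemma shift_ord_inj (s : nat) : injective (shift_ord ^~ s).
Proof.
move=> a b /(congr1 val) /= /eqP; rewrite eqn_modDr !modn_small ?ltn_ord //.
by move=> /eqP ab; apply: val_inj.
Qed.

Lemma shift_ord0 (j : 'I_w) : shift_ord ord0 j = j.
Proof. by apply: val_inj; rewrite /= add0n modn_small. Qed.

Lemma shift_ordA (j : 'I_w) (s t : nat) : shift_ord (shift_ord j s) t = shift_ord j (s + t).
Proof. by apply: val_inj; rewrite /= modnDml addnA. Qed.

Definition translate (d : matrix * 'I_w) : {set point} :=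
  [set p : point | d.1 p.1 (shift_ord p.2 d.2)].

Lemma shift_point_inj (j : nat) : injective (fun p : point => (p.1, shift_ord p.2 j)).
Proof.
by move=> [a b] [a' b'] /= [-> E]; congr (_, _); apply: (@shift_ord_inj j); apply: val_inj.
Qed.

Lemma translate_card (A : matrix) (j : 'I_w) : #|translate (A, j)| = hweight A.
Proof.
have -> : translate (A, j) =
          (fun p : point => (p.1, shift_ord p.2 j)) @^-1: [set p : point | A p.1 p.2].
  by apply/setP => p; rewrite !inE.
by rewrite card_preimset //; apply: shift_point_inj.
Qed.

Lemma corr_card (A B : matrix) (r : nat) :
  corr A B r = #|[set p : point | A p.1 p.2 && B p.1 (shift_ord p.2 r)]|.
Proof.
rewrite /corr pair_bigA card_sum_indicator; apply: eq_bigr => p _; rewrite inE.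
congr (nat_of_bool (_ && _)); apply/existsP/idP => [[j' /andP[/eqP E Bj]] | Bj].
  by have -> : shift_ord p.2 r = j' by apply: val_inj; rewrite /= E.
by exists (shift_ord p.2 r); rewrite eqxx Bj.
Qed.

Lemma translate_meet (A B : matrix) (j1 j2 : 'I_w) :
  #|translate (A, j1) :&: translate (B, j2)| = corr A B (w - j1 + j2).
Proof.
rewrite corr_card.
have -> : translate (A, j1) :&: translate (B, j2) =
   (fun p : point => (p.1, shift_ord p.2 j1)) @^-1:
   [set p : point | A p.1 p.2 && B p.1 (shift_ord p.2 (w - j1 + j2))].
  apply/setP => p; rewrite !inE /= shift_ordA.
  have -> : shift_ord p.2 (j1 + (w - j1 + j2)) = shift_ord p.2 j2; last by [].
  apply: val_inj => /=; have := ltn_ord j1 => lt_j1.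
  have -> : p.2 + (j1 + (w - j1 + j2)) = (p.2 + j2) + w by lia.
  by rewrite modnDr.
by rewrite card_preimset //; apply: shift_point_inj.
Qed.

Lemma relative_shift_neq0 (j1 j2 : 'I_w) : j1 != j2 -> (w - j1 + j2) %% w != 0.
Proof.
move=> /eqP neq; have {}neq : (j1 : nat) <> j2 by move=> E; apply: neq; apply: val_inj.
have h1 := ltn_ord j1; have h2 := ltn_ord j2.
case: (leqP j1 j2) => h.
  have -> : w - j1 + j2 = (j2 - j1) + w by lia.
  by rewrite modnDr modn_small; lia.
by rewrite modn_small; lia.
Qed.

End Translates.

Section Row.
Variables (u n : nat) (C : {set 'M[bool]_(u, n.+1)}).
Hypothesis HC : is_OOC 4 2 C.
Variable i : 'I_u.
Local Notation w := n.+1.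
Local Notation matrix := 'M[bool]_(u, w).

Definition row_blocks : {set matrix * 'I_w} := [set d | (d.1 \in C) && d.1 i d.2].

Definition origin : 'I_u * 'I_w := (i, ord0).

Lemma row_block_through d : d \in row_blocks -> origin \in translate d.
Proof. by rewrite !inE /= shift_ord0 => /andP[]. Qed.

Lemma row_block_card d : d \in row_blocks -> #|translate d| = 4.
Proof. by case: d => A j; rewrite inE => /andP[AC _]; rewrite translate_card HC.1. Qed.

(* This is where the OOC condition enters. *)
Lemma row_blocks_meet d1 d2 : d1 \in row_blocks -> d2 \in row_blocks -> d1 != d2 ->
  #|translate d1 :&: translate d2| <= 2.
Proof.
case: d1 => A j1; case: d2 => B j2; rewrite !inE /= => /andP[AC _] /andP[BC _] neq.
rewrite translate_meet; apply: HC.2 => //.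
case: (eqVneq A B) => [eAB|//]; subst B.
by rewrite relative_shift_neq0 //; rewrite xpair_eqE eqxx in neq.
Qed.

Local Notation row_degree := (degree (@translate u n) row_blocks).

Definition half_point : 'I_u * 'I_w := (i, inord w./2).

Lemma half_point_neq_origin : ~~ odd w -> half_point != origin.
Proof.
move=> ev; apply/negP => /eqP [] /(congr1 val).
have := odd_double_half w; rewrite (negbTE ev) add0n -addnn.
by rewrite /= inordK; lia.
Qed.

(* Shifting a block by half a period swaps the blocks through the origin and
   the half point, without fixed points. *)
Lemma half_point_degree_even : ~~ odd w -> ~~ odd (row_degree half_point).
Proof.
move=> ev; set h := w./2.
have hh : h + h = w by have := odd_double_half w; rewrite (negbTE ev) add0n -addnn.
have hv : val (inord h : 'I_w) = h by apply: inordK; lia.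
pose f (d : matrix * 'I_w) := (d.1, shift_ord d.2 h).
have fK : involutive f.
  move=> [A j]; rewrite /f /= shift_ordA hh; congr (_, _); apply: val_inj => /=.
  by rewrite modnDr modn_small.
rewrite /degree.

apply: (@even_card_swap _ _ f (fun d : matrix * 'I_w => d.2 < h)) => // [[A j]|[A j]].
  rewrite !inE /= => /andP[/andP[AC Aj] Ah].
  have e1 : shift_ord j h = shift_ord (inord h) j by apply: val_inj; rewrite /= hv addnC.
  have e2 : shift_ord (inord h) ((j + h) %% w) = j.
    apply: val_inj; rewrite /= hv modnDmr addnCA addnC hh addnC modnDr modn_small //.
  by rewrite AC e2 Aj e1 Ah.
move=> _; rewrite /= -leqNgt; have := ltn_ord j => jw.
case: (ltnP j h) => jh.
  by rewrite modn_small; lia.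
have -> : j + h = (j - h) + w by lia.
by rewrite modnDr modn_small; lia.
Qed.

Lemma row_blocks_bound : ~~ odd w -> (u * w) %% 4 = 0 ->
  6 * #|row_blocks| + 2 <= (u * w - 1) * (u * w - 2).
Proof.
move=> ev uv_mod4; have cardP : #|{: 'I_u * 'I_w}| = u * w by rewrite card_prod !card_ord.
rewrite -cardP; apply: (packing_bound row_block_card row_blocks_meet row_block_through
  (half_point_neq_origin ev) (half_point_degree_even ev)).
by rewrite cardP.
Qed.

End Row.

(* Every codeword has four ones, so the row counts add up to 4 |C|. *)
Lemma row_blocks_sum (u n : nat) (C : {set 'M[bool]_(u, n.+1)}) : is_OOC 4 2 C ->
  \sum_(i < u) #|row_blocks C i| = 4 * #|C|.
Proof.
move=> HC; under eq_bigr do rewrite card_sum_indicator.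
rewrite exchange_big /= mulnC -sum_nat_const [RHS]big_mkcond /=.
transitivity (\sum_(A : 'M[bool]_(u, n.+1)) \sum_(j < n.+1)
                \sum_(i < u) ((A, j) \in row_blocks C i : nat)).
  by rewrite [RHS]pair_bigA; apply: eq_bigr => -[A j] _.
apply: eq_bigr => A _; case: (boolP (A \in C)) => AC; last first.
  by apply: big1 => j _; apply: big1 => k _; rewrite !inE (negbTE AC).
rewrite -(HC.1 A AC) /hweight card_sum_indicator.
transitivity (\sum_(k < u) \sum_(j < n.+1) (A k j : nat)).
  by rewrite exchange_big /=; apply: eq_bigr => j _; apply: eq_bigr => k _; rewrite !inE AC.
by rewrite pair_bigA; apply: eq_bigr => -[k j] _; rewrite inE.
Qed.

Lemma mod12_factorization (N : nat) : N %% 12 \in [:: 4; 8] ->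
  exists m, (N - 1) * ((N - 2) %/ 2) = 3 * m /\ (N - 1) * (N - 2) = 6 * m.
Proof.
move=> N_mod; have := divn_eq N 12; move: (N %/ 12) => q.
move: N_mod; rewrite !inE => /orP[] /eqP -> ->.
- exists ((4 * q + 1) * (6 * q + 1)).
  have -> : q * 12 + 4 - 2 = (6 * q + 1) * 2 by lia.
  have -> : q * 12 + 4 - 1 = 3 * (4 * q + 1) by lia.
  by rewrite mulnK //; split; ring.
- exists ((12 * q + 7) * (2 * q + 1)).
  have -> : q * 12 + 8 - 2 = (6 * q + 3) * 2 by lia.
  have -> : q * 12 + 8 - 1 = 12 * q + 7 by lia.
  by rewrite mulnK //; split; ring.
Qed.

Lemma row_floor_bound (N d : nat) : N %% 12 \in [:: 4; 8] ->
  6 * d + 2 <= (N - 1) * (N - 2) -> d <= ((N - 1) * ((N - 2) %/ 2)) %/ 3 - 1.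
Proof.
move=> /mod12_factorization [m [-> ->]]; rewrite mulKn //; lia.
Qed.

Theorem lemma5p4 (u v : nat) :
  0 < u -> 0 < v -> ~~ odd v ->
  (u * v) %% 12 \in [:: 4; 8] ->
  forall C : {set 'M[bool]_(u, v)}, is_OOC 4 2 C ->
  #|C| <= lemma5p4_bound u v.
Proof.
case: v => [//|n] _ _ ev Hmod C HC.
set bound := ((u * n.+1 - 1) * ((u * n.+1 - 2) %/ 2)) %/ 3 - 1.
have uv_mod4 : (u * n.+1) %% 4 = 0.
  by rewrite -(modn_dvdm _ (isT : 4 %| 12)); move: Hmod; rewrite !inE => /orP[] /eqP ->.
have row_bound (i : 'I_u) : #|row_blocks C i| <= bound.
  exact: row_floor_bound Hmod (row_blocks_bound HC i ev uv_mod4).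
rewrite /lemma5p4_bound leq_divRL // mulnC -(row_blocks_sum HC).
apply: (@leq_trans (\sum_(i < u) bound)); first exact: leq_sum.
by rewrite sum_nat_const card_ord mulnC.
Qed.
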